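(* For each $\alpha \in (0,1)$ the map $T_\alpha$ is an AFN-map.
   Context: For $\alpha \in (0,1)$ let $D_\alpha = \bigcup_{n \ge 1} \big[ \frac{1}{n+\alpha}, \frac1n \big]$, $D_\alpha^{\mathsf c} = [0,1]\setminus D_\alpha$, $I_\alpha = [\min\{\alpha,1-\alpha\},1]$, and $T_\alpha : I_\alpha \to I_\alpha$, $T_\alpha(x) = \frac1x - \lfloor \frac1x \rfloor$ if $x \in D_\alpha^{\mathsf c}$, $T_\alpha(x) = 1 + \lfloor \frac1x \rfloor - \frac1x$ if $x \in D_\alpha$. Let $X$ be a finite union of bounded intervals. A map $T:X\to X$ is an AFN-map if there is a finite partition $\mathcal P$ of $X$ (up to finitely many points) into non-empty open intervals $I_i$ such that each restriction $T|_{I_i}$ is continuous, strictly monotone and twice differentiable, and: (A) (Adler's condition) $T''/(T')^2$ is bounded on $\bigcup_i I_i$; (F) (finite image condition) the collection $\{T(I_i): I_i\in\mathcal P\}$ is finite; (N) there is a finite set $\mathcal Z\subseteq\mathcal P$ such that each $Z\in\mathcal Z$ has an indifferent fixed point $x_Z$ (an endpoint of $Z$), i.e. $\lim_{x\to x_Z, x\in Z}T(x)=x_Z$ and $\lim_{x\to x_Z,x\in Z}T'(x)=1$, with $T'$ decreasing on $(-\infty,x_Z)\cap Z$ and increasing on $(x_Z,\infty)\cap Z$, and $T$ is uniformly expanding on sets bounded away from $\{x_Z : Z\in\mathcal Z\}$. *)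

From Stdlib Require Import Reals Lra List ClassicalEpsilon.
From Coquelicot Require Import Coquelicot.
Open Scope R_scope.

(* A bounded interval (endpoints open or closed, possibly degenerate). *)
Definition bounded_interval (S : R -> Prop) : Prop :=
  exists a b : R, a <= b /\
    (forall x, a < x < b -> S x) /\ (forall x, S x -> a <= x <= b).

Definition finite_union_bounded_intervals (X : R -> Prop) : Prop :=
  exists L : list (R -> Prop),
    (forall S, In S L -> bounded_interval S) /\
    (forall x, X x <-> exists S, In S L /\ S x).

Definition oint (I : R * R) (x : R) : Prop := fst I < x < snd I.

Definition partition_mod_finite (X : R -> Prop) (P : list (R * R)) : Prop :=
  (forall I, In I P -> fst I < snd I) /\
  (forall I, In I P -> forall x, oint I x -> X x) /\
  NoDup P /\
  (forall I J, In I P -> In J P -> I <> J -> forall x, oint I x -> ~ oint J x) /\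
  (exists F : list R, forall x, X x -> (exists I, In I P /\ oint I x) \/ In x F).

Definition good_branch (T : R -> R) (I : R * R) : Prop :=
  (forall x, oint I x -> continuous T x) /\
  ((forall x y, oint I x -> oint I y -> x < y -> T x < T y) \/
   (forall x y, oint I x -> oint I y -> x < y -> T y < T x)) /\
  (forall x, oint I x -> ex_derive T x) /\
  (forall x, oint I x -> ex_derive (Derive T) x).

Definition indifferent_branch (T : R -> R) (Z : R * R) (xZ : R) : Prop :=
  (xZ = fst Z \/ xZ = snd Z) /\
  filterlim T (within (oint Z) (locally xZ)) (locally xZ) /\
  filterlim (Derive T) (within (oint Z) (locally xZ)) (locally 1) /\
  (forall x y, oint Z x -> oint Z y -> x < y -> y < xZ ->
      Derive T y <= Derive T x) /\
  (forall x y, oint Z x -> oint Z y -> xZ < x -> x < y ->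
      Derive T x <= Derive T y).

Definition AFN_map (X : R -> Prop) (T : R -> R) : Prop :=
  finite_union_bounded_intervals X /\
  (forall x, X x -> X (T x)) /\
  exists P : list (R * R),
    partition_mod_finite X P /\
    (forall I, In I P -> good_branch T I) /\
    (* (A) Adler's condition *)
    (exists M : R, forall I, In I P -> forall x, oint I x ->
        Derive T x <> 0 /\
        Rabs (Derive (Derive T) x / (Derive T x) ^ 2) <= M) /\
    (* (F) finite image condition *)
    (exists L : list (R -> Prop), forall I, In I P ->
        exists S, In S L /\ forall y, S y <-> exists x, oint I x /\ T x = y) /\
    (exists Zs : list ((R * R) * R),
        (forall Z, In Z Zs -> In (fst Z) P /\ indifferent_branch T (fst Z) (snd Z)) /\
        (forall eps, eps > 0 -> exists rho, rho > 1 /\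
           forall I x, In I P -> oint I x ->
             (forall Z, In Z Zs -> Rabs (x - snd Z) >= eps) ->
             Rabs (Derive T x) >= rho)).

Definition flr (x : R) : R := IZR (Int_part x).

Definition D_alpha (alpha x : R) : Prop :=
  exists n : nat, (1 <= n)%nat /\ / (INR n + alpha) <= x <= / INR n.

Definition I_alpha (alpha x : R) : Prop := Rmin alpha (1 - alpha) <= x <= 1.

Definition T_alpha (alpha x : R) : R :=
  if excluded_middle_informative (D_alpha alpha x)
  then 1 + flr (/ x) - / x
  else / x - flr (/ x).

(* On each interval [1/(n+alpha), 1/n], resp. [1/(n+1), 1/(n+alpha)], the map
   T_alpha is x |-> c - 1/x, resp. x |-> c + 1/x, and since I_alpha is bounded away
   from 0 only finitely many of these intervals meet it.  For such a branch
   T' = +/-1/x^2 and T''/T'^2 = -/+2x, which gives Adler's condition with bound 2,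
   and |T'| = 1/x^2 is uniformly > 1 away from x = 1.  The branch 2 - 1/x on
   (1/(1+alpha), 1) has the indifferent fixed point 1. *)

From Stdlib Require Import Reals Lra Lia List ClassicalEpsilon.
From Coquelicot Require Import Coquelicot.
Open Scope R_scope.

Definition inv_branch (c s t : R) : R := c - s / t.

Lemma is_derive_inv_branch c s t : t <> 0 -> is_derive (inv_branch c s) t (s / t ^ 2).
Proof. intros Ht; unfold inv_branch; auto_derive; [exact Ht | field; exact Ht]. Qed.

Lemma is_derive_div_pow2 s t : t <> 0 -> is_derive (fun u => s / u ^ 2) t (- 2 * s / t ^ 3).
Proof. intros Ht; auto_derive; [exact (pow_nonzero t 2 Ht) | field; exact Ht]. Qed.

Lemma locally_oint I x : oint I x -> locally x (oint I).
Proof.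
  intros [H1 H2]. apply (locally_interval _ x (fst I) (snd I)); simpl; auto.
  intros y Hy1 Hy2; split; assumption.
Qed.

Lemma filterlim_within_continuous_ext (D : R -> Prop) (f g : R -> R) x l :
  (forall t, D t -> f t = g t) -> continuous g x -> g x = l ->
  filterlim f (within D (locally x)) (locally l).
Proof.
  intros Hfg Hg <-. apply (filterlim_within_ext _ g).
  { intros t Ht; symmetry; exact (Hfg t Ht). }
  apply (filterlim_filter_le_1 _ (filter_le_within _)). exact Hg.
Qed.

Section InvBranchOn.

Variables (T : R -> R) (c s : R) (I : R * R).
Hypothesis I_nonneg : 0 <= fst I.
Hypothesis T_on_I : forall t, oint I t -> T t = inv_branch c s t.

Lemma is_derive_inv_branch_on x : oint I x -> is_derive T x (s / x ^ 2).
Proof.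
  intros Hx. apply (is_derive_ext_loc (inv_branch c s)).
  - apply (filter_imp (oint I)); [|exact (locally_oint I x Hx)].
    intros t Ht; symmetry; exact (T_on_I t Ht).
  - apply is_derive_inv_branch. destruct Hx; lra.
Qed.

Lemma Derive_inv_branch_on x : oint I x -> Derive T x = s / x ^ 2.
Proof. intros Hx; exact (is_derive_unique _ _ _ (is_derive_inv_branch_on x Hx)). Qed.

Lemma is_derive2_inv_branch_on x : oint I x -> is_derive (Derive T) x (- 2 * s / x ^ 3).
Proof.
  intros Hx. apply (is_derive_ext_loc (fun u => s / u ^ 2)).
  - apply (filter_imp (oint I)); [|exact (locally_oint I x Hx)].
    intros t Ht; symmetry; exact (Derive_inv_branch_on t Ht).
  - apply is_derive_div_pow2. destruct Hx; lra.
Qed.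

Lemma good_branch_inv_branch_on : s = 1 \/ s = -1 -> good_branch T I.
Proof.
  intros Hs. split; [|split; [|split]].
  - intros x Hx. apply (ex_derive_continuous (K := R_AbsRing) (V := R_NormedModule)).
    exists (s / x ^ 2); exact (is_derive_inv_branch_on x Hx).
  - assert (Hinv : forall x y, oint I x -> oint I y -> x < y -> / y < / x).
    { intros x y [Hx _] _ Hxy. apply Rinv_lt_contravar; [nra | exact Hxy]. }
    destruct Hs as [-> | ->]; [left | right]; intros x y Hx Hy Hxy;
      rewrite (T_on_I x Hx), (T_on_I y Hy); unfold inv_branch, Rdiv;
      pose proof (Hinv x y Hx Hy Hxy); lra.
  - intros x Hx. exists (s / x ^ 2); exact (is_derive_inv_branch_on x Hx).
  - intros x Hx. exists (- 2 * s / x ^ 3); exact (is_derive2_inv_branch_on x Hx).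
Qed.

End InvBranchOn.

Definition reciprocal_branch (T : R -> R) (I : R * R) : Prop :=
  exists c s, (s = 1 \/ s = -1) /\ forall t, oint I t -> T t = inv_branch c s t.

Lemma reciprocal_branch_sub T I J :
  fst I <= fst J -> snd J <= snd I -> reciprocal_branch T I -> reciprocal_branch T J.
Proof.
  intros H1 H2 [c [s [Hs HT]]]. exists c, s; split; [exact Hs|].
  intros t [Ht1 Ht2]; apply HT; split; lra.
Qed.

Section UnitReciprocalBranch.

Variables (T : R -> R) (I : R * R).
Hypotheses (I_nonneg : 0 <= fst I) (I_le1 : snd I <= 1).
Hypothesis T_branch : reciprocal_branch T I.

Lemma adler_reciprocal_branch x : oint I x ->
  Derive T x <> 0 /\ Rabs (Derive (Derive T) x / (Derive T x) ^ 2) <= 2.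
Proof.
  intros Hx. destruct T_branch as [c [s [Hs HT]]].
  assert (Hx0 : 0 < x) by (destruct Hx; lra).
  rewrite (Derive_inv_branch_on T c s I I_nonneg HT x Hx).
  rewrite (is_derive_unique _ _ _ (is_derive2_inv_branch_on T c s I I_nonneg HT x Hx)).
  assert (Hs0 : s <> 0) by (destruct Hs; lra).
  assert (Hratio : - 2 * s / x ^ 3 / (s / x ^ 2) ^ 2 = - 2 * s * x)
    by (destruct Hs as [-> | ->]; field; lra).
  rewrite Hratio. split.
  - unfold Rdiv. apply Rmult_integral_contrapositive_currified; [exact Hs0|].
    apply Rinv_neq_0_compat, pow_nonzero; lra.
  - apply Rabs_le. destruct Hx; destruct Hs; subst; lra.
Qed.

Lemma Rabs_Derive_reciprocal_branch x : oint I x -> Rabs (Derive T x) = / x ^ 2.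
Proof.
  intros Hx. destruct T_branch as [c [s [Hs HT]]].
  assert (Hx0 : 0 < x) by (destruct Hx; lra).
  rewrite (Derive_inv_branch_on T c s I I_nonneg HT x Hx).
  assert (Hpos : 0 < / x ^ 2) by (apply Rinv_0_lt_compat; nra).
  destruct Hs as [-> | ->].
  - replace (1 / x ^ 2) with (/ x ^ 2) by (field; lra).
    rewrite Rabs_pos_eq; lra.
  - replace (-1 / x ^ 2) with (- / x ^ 2) by (field; lra).
    rewrite Rabs_Ropp, Rabs_pos_eq; lra.
Qed.

Lemma expanding_reciprocal_branch x eps : oint I x -> Rabs (x - 1) >= eps ->
  Rabs (Derive T x) >= / (1 - Rmin eps (/ 2)).
Proof.
  intros Hx Heps. rewrite (Rabs_Derive_reciprocal_branch x Hx).
  destruct Hx as [Hx1 Hx2].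
  pose proof (Rmin_r eps (/ 2)).
  assert (Hx : x <= 1 - Rmin eps (/ 2)).
  { destruct (Rle_or_lt eps 0).
    - pose proof (Rmin_l eps (/ 2)); lra.
    - rewrite Rabs_left1 in Heps by lra. pose proof (Rmin_l eps (/ 2)); lra. }
  apply Rle_ge, Rle_trans with (/ x).
  - apply Rinv_le_contravar; lra.
  - apply Rinv_le_contravar; nra.
Qed.

End UnitReciprocalBranch.

Lemma indifferent_branch_two_minus_inv T z : 0 <= z < 1 ->
  (forall t, oint (z, 1) t -> T t = inv_branch 2 1 t) -> indifferent_branch T (z, 1) 1.
Proof.
  intros Hz HT.
  assert (Hz0 : 0 <= fst (z, 1)) by (simpl; lra).
  pose proof (Derive_inv_branch_on T 2 1 (z, 1) Hz0 HT) as HD.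
  split; [right; reflexivity|]. split; [|split; [|split]].
  - apply (filterlim_within_continuous_ext _ _ (inv_branch 2 1)); [exact HT| |].
    + apply (ex_derive_continuous (K := R_AbsRing) (V := R_NormedModule)).
      exists (1 / 1 ^ 2); apply is_derive_inv_branch; lra.
    + unfold inv_branch; field.
  - apply (filterlim_within_continuous_ext _ _ (fun u => 1 / u ^ 2)); [exact HD| |].
    + apply (ex_derive_continuous (K := R_AbsRing) (V := R_NormedModule)).
      exists (- 2 * 1 / 1 ^ 3); apply is_derive_div_pow2; lra.
    + field.
  - intros x y Hx Hy Hxy _. rewrite (HD x Hx), (HD y Hy).
    destruct Hx as [Hx _]; simpl in Hx.
    unfold Rdiv; rewrite !Rmult_1_l. apply Rinv_le_contravar; nra.
  - intros x y [_ Hx] _ Hx1 _. simpl in Hx. lra.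
Qed.

Lemma finite_union_bounded_intervals_Icc lo hi : lo <= hi ->
  finite_union_bounded_intervals (fun x => lo <= x <= hi).
Proof.
  intros Hlo. exists ((fun x => lo <= x <= hi) :: nil). split.
  - intros S [<- | []]. exists lo, hi. repeat split; intros; lra.
  - intros x; split.
    + intros Hx. exists (fun x => lo <= x <= hi); split; [left|]; auto.
    + intros [S [[<- | []] HS]]; exact HS.
Qed.

Lemma finite_images_of_finite_partition (T : R -> R) (P : list (R * R)) :
  exists L : list (R -> Prop), forall I, In I P ->
    exists S, In S L /\ forall y, S y <-> exists x, oint I x /\ T x = y.
Proof.
  exists (map (fun I y => exists x, oint I x /\ T x = y) P).
  intros I HI. eexists; split; [apply in_map; exact HI | reflexivity].
Qed.

Lemma AFN_map_of_reciprocal_branches X T P z :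
  finite_union_bounded_intervals X -> (forall x, X x -> X (T x)) ->
  partition_mod_finite X P ->
  (forall I, In I P -> 0 <= fst I /\ snd I <= 1 /\ reciprocal_branch T I) ->
  In (z, 1) P -> (forall t, oint (z, 1) t -> T t = inv_branch 2 1 t) ->
  AFN_map X T.
Proof.
  intros HX HTX HP Hbr HZ HTZ.
  split; [exact HX|]. split; [exact HTX|]. exists P.
  split; [exact HP|]. split; [|split; [|split]].
  - intros I HI. destruct (Hbr I HI) as [H0 [_ [c [s [Hs HT]]]]].
    exact (good_branch_inv_branch_on T c s I H0 HT Hs).
  - exists 2. intros I HI. destruct (Hbr I HI) as [H0 [H1 HT]].
    exact (adler_reciprocal_branch T I H0 H1 HT).
  - apply finite_images_of_finite_partition.
  - exists (((z, 1), 1) :: nil). split.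
    + intros Z [<- | []]. split; [exact HZ|].
      destruct (Hbr _ HZ) as [Hz _]. destruct HP as [Hlt _].
      pose proof (Hlt _ HZ). simpl in *.
      apply indifferent_branch_two_minus_inv; [lra | exact HTZ].
    + intros eps Heps. exists (/ (1 - Rmin eps (/ 2))). split.
      * pose proof (Rmin_glb_lt eps (/ 2) 0 Heps ltac:(lra)). pose proof (Rmin_r eps (/ 2)).
        rewrite <- Rinv_1. apply Rinv_lt_contravar; lra.
      * intros I x HI Hx Haway. destruct (Hbr I HI) as [H0 [H1 HT]].
        exact (expanding_reciprocal_branch T I H0 H1 HT x eps Hx (Haway _ (or_introl eq_refl))).
Qed.

Section BreakpointCells.

Variable c : nat -> R.
Hypothesis c_noninc : forall j, c (S j) <= c j.

Lemma breakpoints_antitone i j : (i <= j)%nat -> c j <= c i.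
Proof. induction 1 as [|j _ IH]; [lra | pose proof (c_noninc j); lra]. Qed.

Definition breakpoint_cells (K : nat) : list (R * R) :=
  map (fun j => (c (S j), c j))
    (filter (fun j => if Rlt_dec (c (S j)) (c j) then true else false) (seq 0 K)).

Lemma In_breakpoint_cells K I : In I (breakpoint_cells K) <->
  exists j, (j < K)%nat /\ c (S j) < c j /\ I = (c (S j), c j).
Proof.
  unfold breakpoint_cells. rewrite in_map_iff. split.
  - intros [j [<- Hj]]. rewrite filter_In, in_seq in Hj. destruct Hj as [Hj Hlt].
    exists j. destruct (Rlt_dec _ _); [repeat split; auto; lia | discriminate].
  - intros [j [Hj [Hlt ->]]]. exists j. split; [reflexivity|].
    rewrite filter_In, in_seq. split; [lia|].
    destruct (Rlt_dec _ _); [reflexivity | contradiction].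
Qed.

Lemma breakpoint_cells_bounds K I : In I (breakpoint_cells K) ->
  c K <= fst I /\ fst I < snd I /\ snd I <= c 0.
Proof.
  rewrite In_breakpoint_cells. intros [j [Hj [Hlt ->]]]. simpl.
  pose proof (breakpoints_antitone (S j) K Hj).
  pose proof (breakpoints_antitone 0 j (Nat.le_0_l j)). lra.
Qed.

Lemma breakpoint_search K x : c K < x <= c 0 -> exists j, (j < K)%nat /\ c (S j) < x <= c j.
Proof.
  induction K as [|K IH]; intros Hx; [lra|].
  destruct (Rlt_or_le (c K) x) as [HK | HK].
  - destruct (IH (conj HK (proj2 Hx))) as [j [Hj Hjx]]. exists j; split; [lia | exact Hjx].
  - exists K; split; [lia | lra].
Qed.

Lemma partition_mod_finite_breakpoint_cells K :
  partition_mod_finite (fun x => c K <= x <= c 0) (breakpoint_cells K).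
Proof.
  split; [|split; [|split; [|split]]].
  - intros I HI. apply (breakpoint_cells_bounds K I HI).
  - intros I HI x [Hx1 Hx2]. pose proof (breakpoint_cells_bounds K I HI). lra.
  - apply NoDup_map_NoDup_ForallPairs; [|apply NoDup_filter, seq_NoDup].
    intros i j Hi Hj Heq. injection Heq as _ Heq.
    rewrite filter_In in Hi, Hj. destruct Hi as [_ Hi], Hj as [_ Hj].
    destruct (Rlt_dec (c (S i)) (c i)) as [Hi'|]; [|discriminate].
    destruct (Rlt_dec (c (S j)) (c j)) as [Hj'|]; [|discriminate].
    destruct (Nat.lt_trichotomy i j) as [H | [H | H]]; [| exact H |].
    + pose proof (breakpoints_antitone (S i) j H); lra.
    + pose proof (breakpoints_antitone (S j) i H); lra.
  - intros I J HI HJ HIJ x [HxI1 HxI2] [HxJ1 HxJ2].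
    apply In_breakpoint_cells in HI as [i [_ [_ ->]]].
    apply In_breakpoint_cells in HJ as [j [_ [_ ->]]].
    simpl in *. destruct (Nat.lt_trichotomy i j) as [H | [H | H]].
    + pose proof (breakpoints_antitone (S i) j H); lra.
    + subst; contradiction.
    + pose proof (breakpoints_antitone (S j) i H); lra.
  - exists (map c (seq 0 (S K))). intros x [Hx1 Hx2].
    assert (Hc : forall j, (j <= K)%nat -> In (c j) (map c (seq 0 (S K)))).
    { intros j Hj. apply in_map, in_seq. lia. }
    destruct (Rle_lt_or_eq_dec _ _ Hx1) as [HK | <-]; [|right; apply Hc; lia].
    destruct (breakpoint_search K x (conj HK Hx2)) as [j [Hj [Hj1 Hj2]]].
    destruct (Rle_lt_or_eq_dec _ _ Hj2) as [Hxj | ->]; [|right; apply Hc; lia].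
    left. exists (c (S j), c j). split; [|split; assumption].
    apply In_breakpoint_cells. exists j. repeat split; [exact Hj | lra].
Qed.

End BreakpointCells.

Lemma Rle_Rinv_comm u t : 0 < u -> u <= / t -> t <= / u.
Proof. intros Hu H. rewrite <- (Rinv_inv t). apply Rinv_le_contravar; assumption. Qed.

Lemma Rlt_Rinv_comm u t : 0 < u -> u < / t -> t < / u.
Proof.
  intros Hu H. rewrite <- (Rinv_inv t). apply Rinv_lt_contravar; [|exact H].
  apply Rmult_lt_0_compat; lra.
Qed.

Lemma Rinv_le_comm u t : 0 < u -> / u <= t -> / t <= u.
Proof.
  intros Hu H. rewrite <- (Rinv_inv u). apply Rinv_le_contravar; [|exact H].
  apply Rinv_0_lt_compat; exact Hu.
Qed.

Lemma Rinv_lt_comm u t : 0 < u -> / u < t -> / t < u.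
Proof.
  intros Hu H. rewrite <- (Rinv_inv u). apply Rinv_lt_contravar; [|exact H].
  pose proof (Rinv_0_lt_compat u Hu). apply Rmult_lt_0_compat; lra.
Qed.

Lemma flr_INR r (n : nat) : INR n <= r < INR n + 1 -> flr r = INR n.
Proof.
  intros Hr. unfold flr.
  rewrite <- (Int_part_spec r (Z.of_nat n)); rewrite <- INR_IZR_INZ; [reflexivity | lra].
Qed.

Fixpoint recip_breakpoint (a : R) (j : nat) : R :=
  match j with
  | O => 1
  | S O => 1 + a
  | S (S j) => recip_breakpoint a j + 1
  end.

Definition consecutive_breakpoints (a u v : R) : Prop :=
  exists n : nat, (1 <= n)%nat /\
    ((u = INR n /\ v = INR n + a) \/ (u = INR n + a /\ v = INR n + 1)).

Section TAlpha.

Variable a : R.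
Hypothesis a_range : 0 < a < 1.

Lemma T_alpha_in_D (n : nat) t : (1 <= n)%nat -> 0 < t ->
  INR n <= / t <= INR n + a -> T_alpha a t = 1 + INR n - / t.
Proof.
  intros Hn Ht Hq. assert (Hn0 : 0 < INR n) by (apply lt_0_INR; lia).
  unfold T_alpha. destruct (excluded_middle_informative (D_alpha a t)) as [_ | HD].
  - rewrite (flr_INR _ n); lra.
  - exfalso; apply HD. exists n. split; [exact Hn|]. split.
    + apply Rinv_le_comm; lra.
    + apply Rle_Rinv_comm; lra.
Qed.

Lemma T_alpha_not_in_D (n : nat) t : (1 <= n)%nat -> 0 < t ->
  INR n + a < / t < INR n + 1 -> T_alpha a t = / t - INR n.
Proof.
  intros Hn Ht Hq. unfold T_alpha.
  destruct (excluded_middle_informative (D_alpha a t)) as [[k [Hk [Hk1 Hk2]]] | _].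
  - exfalso. assert (Hk0 : 0 < INR k) by (apply lt_0_INR; lia).
    assert (Hk1' : / t <= INR k + a) by (apply Rinv_le_comm; lra).
    assert (Hk2' : INR k <= / t) by (apply Rle_Rinv_comm; lra).
    assert (k < S n)%nat by (apply INR_lt; rewrite S_INR; lra).
    assert (n < k)%nat by (apply INR_lt; lra).
    lia.
  - rewrite (flr_INR _ n); lra.
Qed.

Lemma T_alpha_maps_I_alpha x : I_alpha a x -> I_alpha a (T_alpha a x).
Proof.
  unfold I_alpha. intros Hx.
  pose proof (Rmin_l a (1 - a)). pose proof (Rmin_r a (1 - a)).
  assert (Hm : 0 < Rmin a (1 - a)) by (apply Rmin_glb_lt; lra).
  assert (Hx0 : 0 < x) by lra.
  assert (Hx1 : 1 <= / x) by (rewrite <- Rinv_1; apply Rinv_le_contravar; lra).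
  destruct (nfloor_ex (/ x) ltac:(lra)) as [n Hn].
  destruct n as [|n]; [simpl in Hn; lra|].
  destruct (Rle_or_lt (/ x) (INR (S n) + a)).
  - rewrite (T_alpha_in_D (S n) x); [lra | lia | exact Hx0 | lra].
  - rewrite (T_alpha_not_in_D (S n) x); [lra | lia | exact Hx0 | lra].
Qed.

Lemma recip_breakpoint_step j :
  consecutive_breakpoints a (recip_breakpoint a j) (recip_breakpoint a (S j)).
Proof.
  enough (H : forall j,
    consecutive_breakpoints a (recip_breakpoint a j) (recip_breakpoint a (S j)) /\
    consecutive_breakpoints a (recip_breakpoint a (S j)) (recip_breakpoint a (S (S j))))
    by apply H.
  clear j.
  induction j as [|j [[n [Hn IH]] HS]].
  - split; exists 1%nat; split; [lia | left | lia | right]; simpl; split; ring.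
  - split; [exact HS|]. exists (S n). split; [lia|].
    change (recip_breakpoint a (S (S j))) with (recip_breakpoint a j + 1).
    change (recip_breakpoint a (S (S (S j)))) with (recip_breakpoint a (S j) + 1).
    rewrite S_INR. lra.
Qed.

Lemma recip_breakpoint_lt j : recip_breakpoint a j < recip_breakpoint a (S j).
Proof. destruct (recip_breakpoint_step j) as [n [_ [[-> ->] | [-> ->]]]]; lra. Qed.

Lemma recip_breakpoint_ge1 j : 1 <= recip_breakpoint a j.
Proof.
  induction j as [|j IH]; [simpl; lra|]. pose proof (recip_breakpoint_lt j); lra.
Qed.

Lemma recip_breakpoint_double k : recip_breakpoint a (2 * k) = INR k + 1.
Proof.
  induction k as [|k IH]; [simpl; ring|].
  replace (2 * S k)%nat with (S (S (2 * k))) by lia.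
  change (recip_breakpoint a (S (S (2 * k)))) with (recip_breakpoint a (2 * k) + 1).
  rewrite IH, S_INR. ring.
Qed.

Lemma T_alpha_between_breakpoints j :
  reciprocal_branch (T_alpha a) (/ recip_breakpoint a (S j), / recip_breakpoint a j).
Proof.
  pose proof (recip_breakpoint_ge1 j). pose proof (recip_breakpoint_ge1 (S j)).
  assert (Hq : forall t, oint (/ recip_breakpoint a (S j), / recip_breakpoint a j) t ->
    0 < t /\ recip_breakpoint a j < / t < recip_breakpoint a (S j)).
  { intros t [Ht1 Ht2]; cbn [fst snd] in Ht1, Ht2.
    assert (0 < / recip_breakpoint a (S j)) by (apply Rinv_0_lt_compat; lra).
    assert (Ht : 0 < t) by lra.
    split; [exact Ht|]. split; [apply Rlt_Rinv_comm | apply Rinv_lt_comm]; lra. }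
  destruct (recip_breakpoint_step j) as [n [Hn [[E1 E2] | [E1 E2]]]].
  - exists (1 + INR n), 1. split; [left; reflexivity|]. intros t Ht.
    destruct (Hq t Ht) as [Ht0 Hqt]. rewrite (T_alpha_in_D n t Hn Ht0); [|lra].
    unfold inv_branch, Rdiv; ring.
  - exists (- INR n), (-1). split; [right; reflexivity|]. intros t Ht.
    destruct (Hq t Ht) as [Ht0 Hqt]. rewrite (T_alpha_not_in_D n t Hn Ht0); [|lra].
    unfold inv_branch, Rdiv; ring.
Qed.

Lemma T_alpha_first_cell t : oint (/ (1 + a), 1) t -> T_alpha a t = inv_branch 2 1 t.
Proof.
  intros [Ht1 Ht2]; simpl in *.
  assert (0 < / (1 + a)) by (apply Rinv_0_lt_compat; lra).
  assert (Ht : 0 < t) by lra.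
  rewrite (T_alpha_in_D 1 t); [| lia | exact Ht |].
  - unfold inv_branch, Rdiv; simpl; ring.
  - simpl. split; [rewrite <- Rinv_1; apply Rinv_le_contravar | apply Rlt_le, Rinv_lt_comm]; lra.
Qed.

(* Truncation at the left end of [I_alpha] turns the breakpoints 1, 1/(1+a), 1/2,
   1/(2+a), ... of [T_alpha] into a nonincreasing sequence that is eventually
   constant; its nonempty cells are the branch intervals of [T_alpha] on [I_alpha]. *)
Definition alpha_breakpoint (j : nat) : R := Rmax (Rmin a (1 - a)) (/ recip_breakpoint a j).

Lemma alpha_breakpoint_noninc j : alpha_breakpoint (S j) <= alpha_breakpoint j.
Proof.
  apply Rle_max_compat_l, Rinv_le_contravar.
  - pose proof (recip_breakpoint_ge1 j); lra.
  - apply Rlt_le, recip_breakpoint_lt.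
Qed.

Lemma alpha_breakpoint_0 : alpha_breakpoint 0 = 1.
Proof.
  unfold alpha_breakpoint; simpl. rewrite Rinv_1. apply Rmax_right.
  pose proof (Rmin_r a (1 - a)); lra.
Qed.

Lemma alpha_breakpoint_1 : alpha_breakpoint 1 = / (1 + a).
Proof.
  unfold alpha_breakpoint; simpl. apply Rmax_right.
  assert (/ 2 < / (1 + a)) by (apply Rinv_lt_contravar; lra).
  pose proof (Rmin_l a (1 - a)). pose proof (Rmin_r a (1 - a)). lra.
Qed.

Lemma alpha_breakpoint_end : exists K, alpha_breakpoint K = Rmin a (1 - a).
Proof.
  assert (Hm : 0 < Rmin a (1 - a)) by (apply Rmin_glb_lt; lra).
  destruct (INR_archimed 1 (/ Rmin a (1 - a)) ltac:(lra)) as [k Hk].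
  exists (2 * k)%nat. unfold alpha_breakpoint. rewrite recip_breakpoint_double.
  apply Rmax_left, Rinv_le_comm; [exact Hm | lra].
Qed.

Section AlphaCells.

Variable K : nat.
Hypothesis K_end : alpha_breakpoint K = Rmin a (1 - a).

Lemma partition_mod_finite_alpha_cells :
  partition_mod_finite (I_alpha a) (breakpoint_cells alpha_breakpoint K).
Proof.
  pose proof (partition_mod_finite_breakpoint_cells _ alpha_breakpoint_noninc K) as HP.
  rewrite K_end, alpha_breakpoint_0 in HP. exact HP.
Qed.

Lemma alpha_cells_reciprocal I : In I (breakpoint_cells alpha_breakpoint K) ->
  0 <= fst I /\ snd I <= 1 /\ reciprocal_branch (T_alpha a) I.
Proof.
  intros HI.
  destruct (breakpoint_cells_bounds _ alpha_breakpoint_noninc K I HI) as [H1 [_ H2]].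
  rewrite K_end in H1. rewrite alpha_breakpoint_0 in H2.
  pose proof (Rmin_glb_lt a (1 - a) 0 ltac:(lra) ltac:(lra)).
  split; [lra | split; [exact H2|]].
  apply In_breakpoint_cells in HI as [j [_ [Hlt ->]]].
  apply (reciprocal_branch_sub _ (/ recip_breakpoint a (S j), / recip_breakpoint a j)).
  - apply Rmax_r.
  - cbn [snd]. unfold alpha_breakpoint in *. apply Rmax_lub; [|lra].
    destruct (Rle_or_lt (Rmin a (1 - a)) (/ recip_breakpoint a j)) as [Hj | Hj]; [exact Hj|].
    rewrite (Rmax_left _ _ (Rlt_le _ _ Hj)) in Hlt.
    pose proof (Rmax_l (Rmin a (1 - a)) (/ recip_breakpoint a (S j))); lra.
  - apply T_alpha_between_breakpoints.
Qed.

Lemma In_alpha_first_cell : In (/ (1 + a), 1) (breakpoint_cells alpha_breakpoint K).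
Proof.
  rewrite <- alpha_breakpoint_1, <- alpha_breakpoint_0.
  apply In_breakpoint_cells. exists 0%nat. repeat split.
  - destruct K as [|k]; [|lia]. rewrite alpha_breakpoint_0 in K_end.
    pose proof (Rmin_l a (1 - a)); lra.
  - rewrite alpha_breakpoint_1, alpha_breakpoint_0.
    assert (/ (1 + a) < / 1) by (apply Rinv_lt_contravar; lra). rewrite Rinv_1 in *; lra.
Qed.

End AlphaCells.

End TAlpha.

Theorem lemma2p2 : forall alpha : R, 0 < alpha < 1 ->
  AFN_map (I_alpha alpha) (T_alpha alpha).
Proof.
  intros a Ha.
  destruct (alpha_breakpoint_end a Ha) as [K HK].
  apply (AFN_map_of_reciprocal_branches _ _ (breakpoint_cells (alpha_breakpoint a) K)
           (/ (1 + a))).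
  - apply finite_union_bounded_intervals_Icc. pose proof (Rmin_l a (1 - a)); lra.
  - exact (T_alpha_maps_I_alpha a Ha).
  - exact (partition_mod_finite_alpha_cells a Ha K HK).
  - exact (alpha_cells_reciprocal a Ha K HK).
  - exact (In_alpha_first_cell a Ha K HK).
  - exact (T_alpha_first_cell a Ha).
Qed.
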